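(* For all graphs $F$ and $G$ with $F\to G$, \[ \mathsf{HDE}(F,G) \;\le\; \min_{q \in \mathcal Q(G)}\; \max_{\varphi \in \mathsf{Hom}(F,G)}\; \sum_{A\subseteq V_G} q(A)\cdot \mathsf{CC}\big(F|_{\varphi^{-1}(A)}\big). \]
   Context: Graphs are finite directed graphs $G=(V_G,E_G)$ with $V_G$ nonempty finite and $E_G\subseteq V_G\times V_G$ (loops allowed). A homomorphism $\varphi:F\to G$ is a map $V_F\to V_G$ with $(\varphi(a),\varphi(b))\in E_G$ for all $(a,b)\in E_F$; $\mathsf{Hom}(F,G)$ is the set of these, $\hom(F,G)$ its size, $F\to G$ means $\hom(F,G)\ge 1$. For $F\to G$, $\mathsf{HDE}(F,G)=\sup\{c\in\mathbb R:\hom(F,T)\ge\hom(G,T)^c\text{ for all graphs }T\}$. For $A\subseteq V_G$, $G|_A$ is the induced subgraph on $A$; $\mathsf{CC}(H)$ is the number of connected components of the underlying undirected graph of $H$ (edges ignoring direction), with $\mathsf{CC}(G|_\emptyset)=0$. $\mathcal Q(G)$ is the set of functions $q:\wp(V_G)\to\mathbb R$ with $q(\emptyset)=0$, $q(A)\ge0$ for all $A$, and $\sum_{A\subseteq V_G} q(A)\,\mathsf{CC}(G|_A)=1$. *)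

From mathcomp Require Import all_boot.
From Stdlib Require Import Reals.
Set Implicit Arguments. Unset Strict Implicit. Unset Printing Implicit Defensive.

Record graph := Graph {
  vtx : finType;
  vtx_nonempty : (0 < #|vtx|)%N;
  edge : rel vtx
}.

Definition is_hom (F G : graph) (phi : vtx F -> vtx G) : bool :=
  [forall a, forall b, edge a b ==> edge (phi a) (phi b)].

Definition hom (F G : graph) : nat :=
  #|[set f : {ffun vtx F -> vtx G} | is_hom f]|.

Definition induced_und (G : graph) (A : {set vtx G}) : rel (vtx G) :=
  fun x y => [&& x \in A, y \in A & edge x y || edge y x].

Definition CC (G : graph) (A : {set vtx G}) : nat :=
  n_comp (induced_und A) A.

(* Real power convention for n^c with n a natural number:
   n^c = exp(c ln n) for n >= 1 and 0^c = 0. *)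
Definition rpow (n : nat) (c : R) : R :=
  if (n == 0)%N then 0%R else Rpower (INR n) c.

(* c belongs to the set whose supremum is HDE(F,G) *)
Definition HDE_admissible (F G : graph) (c : R) : Prop :=
  forall T : graph, (rpow (hom G T) c <= INR (hom F T))%R.

Definition inQ (G : graph) (q : {set vtx G} -> R) : Prop :=
  q set0 = 0%R /\ (forall A, (0 <= q A)%R) /\
  \big[Rplus/0%R]_(A : {set vtx G}) (q A * INR (CC A))%R = 1%R.

Definition qvalue (F G : graph) (q : {set vtx G} -> R) (phi : vtx F -> vtx G) : R :=
  \big[Rplus/0%R]_(A : {set vtx G}) (q A * INR (CC [set x | phi x \in A]))%R.

(* For a positive weight n on the subsets of V_G, let T_n be the graph whose
   vertices are a vertex v of G together with a label in [0, n A) for every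
   A containing v, two vertices being adjacent when their G-vertices are and
   their labels agree at every A containing both.  Labelling the components of
   each G|_A independently gives hom(G, T_n) >= prod_A n(A)^CC(G|_A); a
   homomorphism F -> T_n is a homomorphism phi : F -> G together with labels
   constant on the components of each F|_{phi^-1(A)}, so
   hom(F, T_n) <= sum_phi prod_A n(A)^CC(F|_{phi^-1(A)}).  With
   n(A) ~ exp(q(A) L) and logarithms, an admissible exponent c satisfies
   c L <= C + L max_phi qvalue(phi) for every L >= 0 with C independent of L,
   whence c <= max_phi qvalue(phi). *)

From HB Require Import structures.
From mathcomp Require Import all_boot.
From Stdlib Require Import Reals Lra.
(* Reals rebinds [^] on [nat] to [Nat.pow]; restore [expn]. *)
Import ssrnat.

Set Implicit Arguments.
Unset Strict Implicit.
Unset Printing Implicit Defensive.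

Lemma leq_card_inj_in (T T' : finType) (f : T -> T') (A : {set T}) (B : {set T'}) :
  {in A &, injective f} -> {in A, forall x, f x \in B} -> #|A| <= #|B|.
Proof.
move=> f_inj fAB; rewrite -(card_in_imset f_inj).
by apply/subset_leq_card/subsetP => _ /imsetP[x xA ->]; exact: fAB.
Qed.

Lemma card_set_family (aT rT : finType) (P : aT -> {set rT}) :
  #|[set f : {ffun aT -> rT} | [forall x, f x \in P x]]| = \prod_x #|P x|.
Proof.
rewrite (eq_card (B := finfun.family (fun x => mem (P x)))); last first.
  by move=> f; rewrite inE; apply/forallP/familyP.
by rewrite card_family foldrE big_map big_enum.
Qed.

Lemma card_ord_lt (k c : nat) : c <= k -> #|[set i : 'I_k | i < c]| = c.
Proof.
move=> le_ck; have widen_inj : injective (widen_ord le_ck).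
  by move=> i j /(congr1 val) /= /val_inj.
rewrite -[RHS]card_ord -(card_imset _ widen_inj).
apply: eq_card => i; rewrite inE; apply/idP/imsetP => [lt_ic | [j _ ->]].
  by exists (Ordinal lt_ic) => //; apply: val_inj.
by rewrite /= ltn_ord.
Qed.

Lemma ord_lt1 (k : nat) (i : 'I_k.+1) : i < 1 -> i = ord0.
Proof. by rewrite ltnS leqn0 => /eqP i0; apply: val_inj. Qed.

Definition label_cap (m : nat) (b : bool) : nat := if b then m else 1.

Lemma card_bounded_labelings (X : finType) (k m : nat) (r : pred X) :
  m <= k.+1 ->
  #|[set h : {ffun X -> 'I_k.+1} | [forall x, h x < label_cap m (x \in r)]]| = m ^ #|r|.
Proof.
move=> m_le.
have -> : [set h : {ffun X -> 'I_k.+1} | [forall x, h x < label_cap m (x \in r)]] =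
    [set h : {ffun X -> 'I_k.+1} |
       [forall x, h x \in [set i : 'I_k.+1 | i < label_cap m (x \in r)]]].
  by apply/setP => h; rewrite !inE; apply: eq_forallb => x; rewrite inE.
rewrite card_set_family (eq_bigr (fun x => label_cap m (x \in r))) => [|x _].
  by rewrite /label_cap -big_mkcond prod_nat_const.
by rewrite card_ord_lt // /label_cap; case: (x \in r).
Qed.

Section ComponentLabelings.
Variables (H : graph) (k : nat).
Implicit Types (B : {set vtx H}) (m : nat).
Local Notation labeling := {ffun vtx H -> 'I_k.+1}.

Lemma induced_und_sym B : connect_sym (induced_und B).
Proof. by apply: sym_connect_sym => x y; rewrite /induced_und andbCA orbC. Qed.

Lemma induced_und_closed B : closed (induced_und B) B.
Proof. by move=> x y /and3P[-> ->]. Qed.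

Lemma mem_root_induced B x : (root (induced_und B) x \in B) = (x \in B).
Proof. by rewrite -(closed_connect (@induced_und_closed B) (connect_root _ x)). Qed.

Definition comp_roots B : pred (vtx H) := [pred x | (x \in B) && roots (induced_und B) x].

Lemma CC_comp_roots B : CC B = #|comp_roots B|.
Proof. by apply: eq_card => x; rewrite !inE andbC. Qed.

Lemma CC_le_card B : CC B <= #|vtx H|.
Proof. by rewrite CC_comp_roots max_card. Qed.

Lemma comp_roots_root B x : x \in B -> root (induced_und B) x \in comp_roots B.
Proof. by move=> xB; rewrite inE mem_root_induced xB (roots_root (@induced_und_sym B)). Qed.

Definition comp_labelings B m : {set labeling} :=
  [set h : labeling | [forall x, forall y, induced_und B x y ==> (h x == h y)]
                    & [forall x, h x < label_cap m (x \in B)]].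

Lemma comp_labeling_root B m h x :
  h \in comp_labelings B m -> h (root (induced_und B) x) = h x.
Proof.
rewrite inE => /andP[/forallP h_const _].
have h_closed : closed (induced_und B) [pred z | h z == h x].
  by move=> y z e_yz; rewrite !inE (eqP (implyP (forallP (h_const y) z) e_yz)).
by have := closed_connect h_closed (connect_root _ x); rewrite !inE eqxx => /esym/eqP.
Qed.

Lemma card_comp_labelings B m : m <= k.+1 -> #|comp_labelings B m| = m ^ CC B.
Proof.
move=> m_bound; rewrite CC_comp_roots -(card_bounded_labelings (comp_roots B) m_bound).
set RL := [set h | _]; apply/eqP; rewrite eqn_leq; apply/andP; split.
- pose restrict (h : labeling) := [ffun x => if x \in comp_roots B then h x else ord0].
  apply: (@leq_card_inj_in _ _ restrict).
  + move=> h1 h2 h1_comp h2_comp /ffunP eq_h; apply/ffunP => x.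
    case: (boolP (x \in B)) => [xB | xNB].
      have := eq_h (root (induced_und B) x); rewrite !ffunE comp_roots_root //.
      by rewrite (comp_labeling_root _ h1_comp) (comp_labeling_root _ h2_comp).
    move: h1_comp h2_comp; rewrite !inE => /andP[_ /forallP/(_ x)] + /andP[_ /forallP/(_ x)].
    by rewrite (negbTE xNB) => /ord_lt1 -> /ord_lt1 ->.
  + move=> h h_comp; rewrite inE; apply/forallP => x; rewrite ffunE.
    case x_root: (x \in comp_roots B) => //; case/andP: x_root => xB _.
    by move: h_comp; rewrite inE => /andP[_ /forallP/(_ x)]; rewrite xB.
- pose extend (h : labeling) := [ffun x => h (root (induced_und B) x)].
  apply: (@leq_card_inj_in _ _ extend).
  + move=> h1 h2 h1_root h2_root /ffunP eq_h; apply/ffunP => x.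
    case x_root: (x \in comp_roots B).
      by have := eq_h x; rewrite !ffunE; case/andP: x_root => _ /eqP ->.
    move: h1_root h2_root; rewrite !inE => /forallP/(_ x) + /forallP/(_ x).
    by rewrite x_root => /ord_lt1 -> /ord_lt1 ->.
  + move=> h; rewrite !inE => /forallP h_bound; apply/andP; split.
      apply/forallP => x; apply/forallP => y; apply/implyP => e_xy; rewrite !ffunE.
      by rewrite (rootP (@induced_und_sym B) (connect1 e_xy)).
    apply/forallP => x; rewrite ffunE; have := h_bound (root (induced_und B) x).
    case: (boolP (x \in B)) => [xB | xNB]; first by rewrite comp_roots_root.
    by rewrite inE mem_root_induced (negbTE xNB).
Qed.

End ComponentLabelings.

Section LabelGraph.
Variables (G : graph) (n : {set vtx G} -> nat).
Hypothesis n_gt0 : forall A, 0 < n A.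

Definition label_max : nat := \max_(A : {set vtx G}) n A.
Local Notation label := 'I_label_max.+1.

Lemma n_le_label_max A : n A <= label_max.+1.
Proof. by rewrite leqW // (leq_bigmax_cond A (P := predT)). Qed.

(* All labels live in the common type 'I_label_max.+1; the label at a set A
   is < n A when v \in A and is 0 otherwise. *)
Definition label_ok (p : vtx G * {ffun {set vtx G} -> label}) : bool :=
  [forall A, p.2 A < label_cap (n A) (p.1 \in A)].

Definition label_vtx := {p | label_ok p}.

Lemma label_ok_ord0 v : label_ok (v, [ffun=> ord0]).
Proof. by apply/forallP => A; rewrite ffunE /label_cap; case: ifP; rewrite ?n_gt0. Qed.

Definition zero_label (v : vtx G) : label_vtx := exist label_ok _ (label_ok_ord0 v).

Lemma label_vtx_nonempty : 0 < #|{: label_vtx}|.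
Proof. by have /card_gt0P[v _] := vtx_nonempty G; apply/card_gt0P; exists (zero_label v). Qed.

Definition label_edge (s t : label_vtx) : bool :=
  edge (val s).1 (val t).1 &&
  [forall A : {set vtx G},
     ((val s).1 \in A) && ((val t).1 \in A) ==> ((val s).2 A == (val t).2 A)].

Definition label_graph : graph := Graph label_vtx_nonempty label_edge.

Lemma label_edge_eq (s t : label_vtx) (A : {set vtx G}) :
  label_edge s t -> (val s).1 \in A -> (val t).1 \in A -> (val s).2 A = (val t).2 A.
Proof. by case/andP=> _ /forallP/(_ A) /implyP eq_st sA tA; apply/eqP/eq_st/andP. Qed.

Definition comp_label_family (H : graph) (B : {set vtx G} -> {set vtx H}) :=
  [set g : {ffun {set vtx G} -> {ffun vtx H -> label}} |
     [forall A, g A \in comp_labelings label_max (B A) (n A)]].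

Lemma card_comp_label_family H (B : {set vtx G} -> {set vtx H}) :
  #|comp_label_family B| = \prod_A n A ^ CC (B A).
Proof.
rewrite card_set_family; apply: eq_bigr => A _.
exact: card_comp_labelings (n_le_label_max A).
Qed.

Lemma hom_label_graph_lower : \prod_A n A ^ CC A <= hom G label_graph.
Proof.
pose lab (g : {ffun {set vtx G} -> {ffun vtx G -> label}}) v : {ffun {set vtx G} -> label} :=
  [ffun A => g A v].
have lab_ok g v : g \in comp_label_family (fun A => A) -> label_ok (v, lab g v).
  rewrite inE => /forallP g_comp; apply/forallP => A; rewrite ffunE.
  by have := g_comp A; rewrite inE => /andP[_ /forallP].
pose lift g : {ffun vtx G -> label_vtx} := [ffun v => insubd (zero_label v) (v, lab g v)].
have val_lift g v : g \in comp_label_family (fun A => A) -> val (lift g v) = (v, lab g v).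
  by move=> g_comp; rewrite ffunE val_insubd lab_ok.
rewrite -(card_comp_label_family (fun A => A)) /hom.
apply: (@leq_card_inj_in _ _ lift) => [g1 g2 g1_comp g2_comp eq_lift | g g_comp].
  apply/ffunP => A; apply/ffunP => v.
  have := congr1 (fun f : {ffun vtx G -> label_vtx} => (val (f v)).2 A) eq_lift.
  by rewrite /= !val_lift // !ffunE.
rewrite inE; apply/forallP => a; apply/forallP => b; apply/implyP => e_ab.
rewrite /= /label_edge !val_lift //= e_ab; apply/forallP => A; apply/implyP => /andP[aA bA].
move: g_comp; rewrite inE => /forallP/(_ A); rewrite inE => /andP[/forallP/(_ a)/forallP/(_ b) + _].
by rewrite !ffunE /induced_und aA bA e_ab.
Qed.

Lemma hom_label_graph_gt0 : 0 < hom G label_graph.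
Proof.
apply: leq_trans hom_label_graph_lower.
by rewrite prodn_gt0 // => A; rewrite expn_gt0 n_gt0.
Qed.

Lemma hom_label_graph_upper (F : graph) :
  hom F label_graph <= \sum_(phi : {ffun vtx F -> vtx G} | is_hom phi)
                         \prod_A n A ^ CC [set x | phi x \in A].
Proof.
pose base (psi : {ffun vtx F -> label_vtx}) : {ffun vtx F -> vtx G} := [ffun a => (val (psi a)).1].
rewrite /hom -sum1_card (partition_big base (fun phi => is_hom phi)) => [|psi]; last first.
  rewrite inE => /forallP psi_hom; apply/forallP => a; apply/forallP => b; apply/implyP => e_ab.
  by rewrite !ffunE; case/andP: (implyP (forallP (psi_hom a) b) e_ab).
apply: leq_sum => phi _; rewrite sum1dep_card -card_comp_label_family.
have base_val psi a : base psi = phi -> (val (psi a)).1 = phi a by move=> <-; rewrite ffunE.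
pose labels (psi : {ffun vtx F -> label_vtx}) : {ffun {set vtx G} -> {ffun vtx F -> label}} :=
  [ffun A => [ffun a => (val (psi a)).2 A]].
apply: (@leq_card_inj_in _ _ labels) => [psi1 psi2 | psi]; rewrite !inE.
  move=> /andP[_ /eqP base1] /andP[_ /eqP base2] eq_labels; apply/ffunP => a; apply: val_inj.
  rewrite [val (psi1 a)]surjective_pairing [val (psi2 a)]surjective_pairing.
  rewrite (base_val _ _ base1) (base_val _ _ base2); congr pair; apply/ffunP => A.
  have := congr1 (fun g : {ffun {set vtx G} -> {ffun vtx F -> label}} => g A a) eq_labels.
  by rewrite !ffunE.
move=> /andP[psi_hom /eqP base_psi]; apply/forallP => A; rewrite ffunE inE.
have psi_edge a b : edge a b -> label_edge (psi a) (psi b).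
  exact: implyP (forallP (forallP psi_hom a) b).
have psi_in a : ((val (psi a)).1 \in A) = (a \in [set x | phi x \in A]).
  by rewrite base_val // inE.
apply/andP; split.
  apply/forallP => a; apply/forallP => b; apply/implyP => /and3P[aA bA /orP[e_ab | e_ba]].
    by rewrite !ffunE (label_edge_eq (psi_edge _ _ e_ab)) ?psi_in.
  by rewrite !ffunE (label_edge_eq (psi_edge _ _ e_ba)) ?psi_in.
apply/forallP => a; rewrite ffunE -psi_in; exact: (forallP (valP (psi a)) A).
Qed.

End LabelGraph.

Lemma sum_le_card_bigmax (T : finType) (P : pred T) (f : T -> nat) :
  \sum_(t | P t) f t <= #|[set t | P t]| * \max_(t | P t) f t.
Proof.
rewrite -sum1dep_card big_distrl /=; apply: leq_sum => t Pt.
by rewrite mul1n; exact: leq_bigmax_cond.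
Qed.

Open Scope R_scope.

HB.instance Definition _ := Monoid.isComLaw.Build R 0 Rplus
  (fun x y z => esym (Rplus_assoc x y z)) Rplus_comm Rplus_0_l.
HB.instance Definition _ := Monoid.isMulLaw.Build R 0 Rmult Rmult_0_l Rmult_0_r.
HB.instance Definition _ := Monoid.isAddLaw.Build R Rmult Rplus
  Rmult_plus_distr_r Rmult_plus_distr_l.

Lemma Rle_big_sum (I : finType) (f g : I -> R) :
  (forall i, f i <= g i) -> \big[Rplus/0]_i f i <= \big[Rplus/0]_i g i.
Proof.
move=> le_fg; apply: big_ind2 => [|x1 x2 y1 y2|i _];
  [exact: Rle_refl | exact: Rplus_le_compat | exact: le_fg].
Qed.

Lemma seq_arg_max (T : eqType) (f : T -> R) (t0 : T) (s : seq T) :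
  exists2 t, t \in t0 :: s & forall u, u \in t0 :: s -> f u <= f t.
Proof.
elim: s t0 => [|a s IH] t0.
  by exists t0 => [|u]; rewrite ?mem_seq1 // => /eqP ->; apply: Rle_refl.
have [t ts t_max] := IH a; case: (Rle_lt_dec (f t0) (f t)) => [le_t0t | lt_tt0].
  exists t => [|u]; first by rewrite in_cons ts orbT.
  by rewrite in_cons => /orP[/eqP -> // | /t_max].
exists t0 => [|u]; first exact: mem_head.
by rewrite in_cons => /orP[/eqP -> | /t_max]; lra.
Qed.

Lemma fin_arg_max (T : finType) (P : pred T) (f : T -> R) (t0 : T) :
  P t0 -> exists2 t, P t & forall u, P u -> f u <= f t.
Proof.
move=> Pt0; have [t t_in t_max] := seq_arg_max f t0 [seq u <- enum T | P u].
exists t => [|u Pu]; last by apply: t_max; rewrite in_cons mem_filter Pu mem_enum orbT.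
by move: t_in; rewrite in_cons mem_filter => /orP[/eqP -> | /andP[]].
Qed.

Lemma le_of_linear_bound (c M K : R) :
  (forall L, 0 <= L -> c * L <= K + M * L) -> c <= M.
Proof.
move=> bound; apply: Rnot_lt_le => lt_Mc.
have K_ge0 : 0 <= K by have := bound 0 (Rle_refl 0); lra.
have L_ge0 : 0 <= (K + 1) / (c - M).
  by apply: Rmult_le_pos; [lra | apply/Rlt_le/Rinv_0_lt_compat; lra].
have := bound _ L_ge0.
have -> : c * ((K + 1) / (c - M)) = K + 1 + M * ((K + 1) / (c - M)) by field; lra.
lra.
Qed.

Lemma ln_le x y : 0 < x -> x <= y -> ln x <= ln y.
Proof. by move=> x_gt0 [/(ln_increasing _ _ x_gt0)/Rlt_le | ->] //; apply: Rle_refl. Qed.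

Lemma INR_expn (m k : nat) : INR (m ^ k) = INR m ^ k.
Proof. by elim: k => [|k IH] //; rewrite expnS mulnE mult_INR IH. Qed.

Lemma ln_INR_prod_expn (I : finType) (m k : I -> nat) : (forall i, (0 < m i)%N) ->
  ln (INR (\prod_i m i ^ k i)) = \big[Rplus/0]_i (INR (k i) * ln (INR (m i))).
Proof.
move=> m_gt0; apply: (proj2 (big_ind2 (fun p s => (0 < p)%N /\ ln (INR p) = s) _ _ _)).
- by rewrite ln_1.
- move=> p1 s1 p2 s2 [p1_gt0 <-] [p2_gt0 <-]; rewrite muln_gt0 p1_gt0 mulnE mult_INR.
  by rewrite ln_mult //; apply/lt_0_INR/ltP.
- move=> i _; rewrite expn_gt0 m_gt0 INR_expn ln_pow //; apply/lt_0_INR/ltP; exact: m_gt0.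
Qed.

Definition nat_up (x : R) : nat := Z.to_nat (up x).

Lemma nat_up_bounds x : 1 <= x -> x < INR (nat_up x) <= 2 * x.
Proof.
move=> x_ge1; have [gt_up le_up] := archimed x.
have up_ge0 : (0 <= up x)%Z by apply: le_IZR; lra.
rewrite /nat_up INR_IZR_INZ Znat.Z2Nat.id //; lra.
Qed.

(* Rounding [exp (q A * L)] up to an integer loses at most a factor 2 on each
   of the at most [#|V_H|] components counted for [A]. *)
Definition rounding_loss (G H : graph) : R :=
  \big[Rplus/0]_(A : {set vtx G}) (INR #|vtx H| * ln 2).

Section ScaledLabelGraph.
Variables (G : graph) (q : {set vtx G} -> R) (L : R).
Hypotheses (q_ge0 : forall A, 0 <= q A) (L_ge0 : 0 <= L).

Definition scaled_count (A : {set vtx G}) : nat := nat_up (exp (q A * L)).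

Lemma exp_scaled_ge1 A : 1 <= exp (q A * L).
Proof. have := exp_ineq1_le (q A * L); have := Rmult_le_pos _ _ (q_ge0 A) L_ge0; lra. Qed.

Lemma scaled_count_gt0 A : (0 < scaled_count A)%N.
Proof.
apply/ltP/INR_lt; have [lo _] := nat_up_bounds (exp_scaled_ge1 A).
by have := exp_pos (q A * L); rewrite /scaled_count [INR 0]/=; lra.
Qed.

Lemma ln_scaled_count_bounds A :
  q A * L <= ln (INR (scaled_count A)) <= ln 2 + q A * L.
Proof.
have [lo hi] := nat_up_bounds (exp_scaled_ge1 A); have exp_gt0 := exp_pos (q A * L).
rewrite /scaled_count; split; first by rewrite -[X in X <= _]ln_exp; apply: ln_le => //; lra.
by rewrite -[X in _ <= _ + X]ln_exp -ln_mult; [apply: ln_le | lra | ]; lra.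
Qed.

Lemma ln_prod_scaled_count_bounds (H : graph) (B : {set vtx G} -> {set vtx H}) :
  L * \big[Rplus/0]_A (q A * INR (CC (B A)))
    <= ln (INR (\prod_A scaled_count A ^ CC (B A)))
    <= rounding_loss G H + L * \big[Rplus/0]_A (q A * INR (CC (B A))).
Proof.
rewrite ln_INR_prod_expn; last exact: scaled_count_gt0.
rewrite big_distrr /rounding_loss -big_split; split; apply: Rle_big_sum => A /=;
  have [lo hi] := ln_scaled_count_bounds A; have CC_ge0 := pos_INR (CC (B A)).
  by have := Rmult_le_compat_l _ _ _ CC_ge0 lo; lra.
have CC_le : INR (CC (B A)) <= INR #|vtx H| by apply/le_INR/leP/CC_le_card.
have ln2_ge0 : 0 <= ln 2 by rewrite -ln_1; apply: ln_le; lra.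
apply: Rle_trans (Rmult_le_compat_l _ _ _ CC_ge0 hi) _; rewrite Rmult_plus_distr_l.
by apply: Rplus_le_compat; [exact: Rmult_le_compat_r | right; ring].
Qed.

Definition scaled_graph : graph := label_graph scaled_count_gt0.

Lemma hom_scaled_graph_gt0 : (0 < hom G scaled_graph)%N.
Proof. exact: hom_label_graph_gt0. Qed.

Lemma ln_hom_scaled_graph_ge :
  \big[Rplus/0]_A (q A * INR (CC A)) = 1 -> L <= ln (INR (hom G scaled_graph)).
Proof.
move=> q_norm; have [lo _] := ln_prod_scaled_count_bounds (fun A => A).
rewrite q_norm Rmult_1_r in lo; apply: Rle_trans lo (ln_le _ _).
  by apply/lt_0_INR/ltP; rewrite prodn_gt0 // => A; rewrite expn_gt0 scaled_count_gt0.
exact/le_INR/leP/hom_label_graph_lower.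
Qed.

Lemma ln_hom_scaled_graph_le (F : graph) (M : R) :
  (0 < hom F G)%N -> (0 < hom F scaled_graph)%N ->
  (forall phi : {ffun vtx F -> vtx G}, is_hom phi -> qvalue q phi <= M) ->
  ln (INR (hom F scaled_graph)) <= ln (INR (hom F G)) + (rounding_loss G F + L * M).
Proof.
move=> hFG hFT qvalue_le.
pose P (phi : {ffun vtx F -> vtx G}) := \prod_A scaled_count A ^ CC [set x | phi x \in A].
have [phi0 phi0_hom max_P] : {phi0 : {ffun vtx F -> vtx G} | is_hom phi0 &
    (\max_(phi : {ffun vtx F -> vtx G} | is_hom phi) P phi)%N = P phi0}.
  by apply: eq_bigmax_cond; move: hFG; rewrite /hom cardsE.
have hFT_le : (hom F scaled_graph <= hom F G * P phi0)%N.
  rewrite -max_P; apply: leq_trans (hom_label_graph_upper scaled_count_gt0 F) _.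
  exact: sum_le_card_bigmax.
have P_gt0 : (0 < P phi0)%N by rewrite prodn_gt0 // => A; rewrite expn_gt0 scaled_count_gt0.
have [_ ln_P] := ln_prod_scaled_count_bounds (fun A => [set x | phi0 x \in A]).
have := ln_le (lt_0_INR _ (ltP hFT)) (le_INR _ _ (leP hFT_le)).
rewrite mulnE mult_INR ln_mult; try exact/lt_0_INR/ltP.
have := Rmult_le_compat_l _ _ _ L_ge0 (qvalue_le _ phi0_hom).
move: ln_P; rewrite -/(P phi0) -/(qvalue q phi0); lra.
Qed.

End ScaledLabelGraph.

Lemma qvalue_ge0 (F G : graph) (q : {set vtx G} -> R) (phi : vtx F -> vtx G) :
  (forall A, 0 <= q A) -> 0 <= qvalue q phi.
Proof.
move=> q_ge0; apply: big_ind => [|x y|A _]; [apply: Rle_refl | apply: Rplus_le_le_0_compat|].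
exact: Rmult_le_pos (q_ge0 A) (pos_INR _).
Qed.

Lemma admissible_ln_le (F G T : graph) (c : R) :
  HDE_admissible F G c -> (0 < hom G T)%N ->
  (0 < hom F T)%N /\ c * ln (INR (hom G T)) <= ln (INR (hom F T)).
Proof.
move=> adm hGT; have := adm T; rewrite /rpow (negbTE (lt0n_neq0 hGT)) /Rpower => exp_le.
have hFT : 0 < INR (hom F T) by apply: Rlt_le_trans exp_le; exact: exp_pos.
split; first exact/ltP/INR_lt.
by rewrite -[c * _]ln_exp; apply: ln_le; first exact: exp_pos.
Qed.

Theorem theorem3p2 (F G : graph) (hFG : (0 < hom F G)%N) :
  forall q : {set vtx G} -> R, inQ q ->
  forall c : R, HDE_admissible F G c ->
  exists phi : vtx F -> vtx G, is_hom phi /\ (c <= qvalue q phi)%R.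
Proof.
move=> q [_ [q_ge0 q_norm]] c adm.
have [phi0 phi0_hom] : exists phi0 : {ffun vtx F -> vtx G}, is_hom phi0.
  by move: hFG; rewrite /hom => /card_gt0P[phi0]; rewrite inE; exists phi0.
have [phi phi_hom phi_max] := fin_arg_max (P := fun phi : {ffun vtx F -> vtx G} => is_hom phi)
  (fun phi => qvalue q phi) phi0_hom.
exists phi; split => //.
case: (Rle_or_lt c 0) => [c_le0 | c_gt0]; first exact: Rle_trans c_le0 (qvalue_ge0 phi q_ge0).
apply: (le_of_linear_bound (K := ln (INR (hom F G)) + rounding_loss G F)) => L L_ge0.
have lnGT_ge := ln_hom_scaled_graph_ge q_ge0 L_ge0 q_norm.
have [hFT lnFT_ge] := admissible_ln_le adm (hom_scaled_graph_gt0 q_ge0 L_ge0).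
have lnFT_le := ln_hom_scaled_graph_le hFG hFT phi_max.
have := Rmult_le_compat_l _ _ _ (Rlt_le _ _ c_gt0) lnGT_ge; lra.
Qed.
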